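(* Let $g,d:\mathbb{N}\to\mathbb{N}$ be two functions such that $g\in n+o(n)$ and $d\in o(n)$. Define $f:\mathbb{N}\to\mathbb{N}$ by $f(n)=\max_{n=n_1+\dots+n_{d(n)}}\sum_{i=1}^{d(n)}g(n_i)$, where the maximum ranges over all ways of writing $n$ as a sum of $d(n)$ natural numbers $n_1,\dots,n_{d(n)}$. Then $f\in n+o(n)$. *)

From mathcomp Require Import all_boot all_order all_algebra.
Set Implicit Arguments. Unset Strict Implicit. Unset Printing Implicit Defensive.
Import Order.TTheory GRing.Theory Num.Theory.

Local Open Scope ring_scope.

Definition little_o_n (h : nat -> nat) : Prop :=
  forall eps : rat, 0 < eps ->
    exists N : nat, forall n : nat, (N <= n)%N ->
      (h n)%:R <= eps * n%:R.

Definition n_plus_little_o_n (h : nat -> nat) : Prop :=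
  forall eps : rat, 0 < eps ->
    exists N : nat, forall n : nat, (N <= n)%N ->
      `|(h n)%:R - n%:R| <= eps * n%:R.

(* Each part n_i is <= n, so parts are encoded
   as elements of 'I_n.+1.  (The max over an empty range would be 0; this
   never happens when d n >= 1.) *)
Definition fmax (g d : nat -> nat) (n : nat) : nat :=
  \max_(t : {ffun 'I_(d n) -> 'I_n.+1} | (\sum_(i < d n) (t i : nat) == n)%N)
     \sum_(i < d n) g (t i).

(* The partition (n, 0, ..., 0) gives f n >= g n, which is the lower bound.
   For the upper bound, g m <= (1 + eps) m + C for all m, with C bounding g on
   the finitely many small m; summing over a partition into d n parts gives
   f n <= (1 + eps) n + C d n, and C d n = o(n) because d is. *)
From mathcomp Require Import all_boot all_order all_algebra.
From mathcomp Require Import lra.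
Set Implicit Arguments. Unset Strict Implicit. Unset Printing Implicit Defensive.
Import Order.TTheory GRing.Theory Num.Theory.

Local Open Scope ring_scope.

Lemma fmax_ge (g d : nat -> nat) (n : nat) : (0 < d n)%N -> (g n <= fmax g d n)%N.
Proof.
rewrite /fmax; case: (d n) => // k _.
pose t := [ffun i : 'I_k.+1 => if i == ord0 then (ord_max : 'I_n.+1) else ord0].
have t0 : t ord0 = ord_max by rewrite ffunE.
have t_lift i : t (lift ord0 i) = ord0 by rewrite ffunE.
apply: (leq_trans _ (@leq_bigmax_cond _ _ _ t _)).
  by rewrite big_ord_recl t0 leq_addr.
by rewrite big_ord_recl t0 big1 ?addn0 // => i _; rewrite t_lift.
Qed.

Lemma fmax_le (g d : nat -> nat) (n : nat) (a c : rat) :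
  0 <= a -> 0 <= c -> (forall m, (g m)%:R <= a * m%:R + c) ->
  (fmax g d n)%:R <= a * n%:R + c * (d n)%:R.
Proof.
move=> a_ge0 c_ge0 g_le.
apply: (big_ind (fun x : nat => x%:R <= a * n%:R + c * (d n)%:R)).
- by rewrite addr_ge0 ?mulr_ge0.
- by move=> x y x_le y_le; rewrite natr_max ge_max x_le.
move=> t /eqP sum_t; rewrite natr_sum.
apply: (le_trans (ler_sum _ (fun i _ => g_le (t i)))).
by rewrite big_split /= -mulr_sumr -natr_sum sum_t sumr_const card_ord [c * _]mulr_natr.
Qed.

Lemma n_plus_little_o_n_affine_bound (g : nat -> nat) (eps : rat) :
  n_plus_little_o_n g -> 0 < eps ->
  exists C : nat, forall m, (g m)%:R <= (1 + eps) * m%:R + C%:R.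
Proof.
move=> g_o eps_gt0; have [N g_near] := g_o _ eps_gt0.
exists (\max_(j < N) g j)%N => m.
have m_ge0 : (0 : rat) <= m%:R by [].
have C_ge0 : (0 : rat) <= (\max_(j < N) g j)%N%:R by [].
case: (ltnP m N) => [m_lt | m_ge].
  have : (g m <= \max_(j < N) g j)%N.
    exact: (leq_bigmax_cond (F := fun j : 'I_N => g j) (Ordinal m_lt)).
  rewrite -(ler_nat rat); nra.
by move: (g_near m m_ge); rewrite ler_norml => /andP[_]; lra.
Qed.

Lemma little_o_nMl (d : nat -> nat) (c : nat) :
  little_o_n d -> little_o_n (fun n => c * d n)%N.
Proof.
move=> d_o eps eps_gt0.
have c1_gt0 : (0 : rat) < c%:R + 1 by rewrite ltr_wpDl.
have [N d_near] := d_o (eps / (c%:R + 1)) (divr_gt0 eps_gt0 c1_gt0).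
exists N => n /d_near d_le; rewrite natrM.
have c_ge0 : (0 : rat) <= c%:R by [].
have n_ge0 : (0 : rat) <= n%:R by [].
have d_ge0 : (0 : rat) <= (d n)%:R by [].
have eps_c1 : (c%:R + 1) * (eps / (c%:R + 1)) = eps.
  by rewrite mulrC divfK // gt_eqF.
move: d_le eps_c1; set e := eps / _ => d_le eps_c1; nra.
Qed.

Theorem lemma5p5 (g d : nat -> nat) :
  (forall n : nat, (0 < n)%N -> (0 < d n)%N) ->
  n_plus_little_o_n g ->
  little_o_n d ->
  n_plus_little_o_n (fmax g d).
Proof.
move=> d_gt0 g_o d_o eps eps_gt0.
have e_gt0 : 0 < eps / 2 by rewrite divr_gt0.
have [C g_le] := n_plus_little_o_n_affine_bound g_o e_gt0.
have [N1 g_near] := g_o _ e_gt0.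
have [N2 Cd_small] := little_o_nMl C d_o e_gt0.
exists (maxn 1 (maxn N1 N2)) => n; rewrite !geq_max => /and3P[n_gt0 nN1 nN2].
have f_ge : ((g n)%:R <= (fmax g d n)%:R :> rat).
  by rewrite ler_nat fmax_ge ?d_gt0.
have f_le := @fmax_le g d n (1 + eps / 2) C%:R ltac:(lra) (ler0n _ _) g_le.
move: (g_near n nN1) (Cd_small n nN2); rewrite natrM ler_norml => /andP[g_lo _] Cd_le.
rewrite ler_norml; apply/andP; split; lra.
Qed.
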